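(* Let $D$ be a probability distribution on a finite set $\Omega$ with $\mathrm{cp}(D)\le1/N$ for a positive integer $N$, and let $g:\Omega\to\mathbb R$. Then there is a set $T\subseteq\Omega$ of size $N$ such that $\mathbb E_{x\in T}g(x)^2\ge(\mathbb E\,g(D))^2/4$.
   Context: $\mathrm{cp}(D)$ is the collision probability of $D$, i.e. the probability that two independent samples from $D$ are equal. $\mathbb E_{x\in T}$ denotes the uniform average over $T$, and $\mathbb E\,g(D)$ is the expectation of $g$ under $D$. *)

From HB Require Import structures.
From mathcomp Require Import all_boot all_order all_algebra.
Set Implicit Arguments. Unset Strict Implicit. Unset Printing Implicit Defensive.
Import Order.TTheory GRing.Theory Num.Theory.
Local Open Scope ring_scope.

Definition is_distribution (R : realFieldType) (Omega : finType) (D : Omega -> R) : Prop :=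
  (forall x, 0 <= D x) /\ \sum_(x : Omega) D x = 1.

(* Collision probability: Pr[X = Y] for X, Y independent samples of D. *)
Definition cp (R : realFieldType) (Omega : finType) (D : Omega -> R) : R :=
  \sum_(x : Omega) D x ^+ 2.

Definition expect (R : realFieldType) (Omega : finType) (D : Omega -> R) (g : Omega -> R) : R :=
  \sum_(x : Omega) D x * g x.

Definition avg (R : realFieldType) (Omega : finType) (T : {set Omega}) (f : Omega -> R) : R :=
  (\sum_(x in T) f x) / (#|T|%:R).

(* Fix T of size N maximising the sum of g^2 and let a be its average.  By the exchange
   argument every point outside T has g^2 <= a.  Split E g(D) into the parts over T and
   over its complement.  Cauchy-Schwarz bounds the first square by cp(D) * N * a <= a and
   the second by Pr[D notin T] * E[g(D)^2; D notin T] <= a, so (E g(D))^2 <= 2a + 2a. *)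
From mathcomp Require Import all_boot all_order all_algebra.
From mathcomp Require Import ring lra.
Import Order.TTheory GRing.Theory Num.Theory.
Set Implicit Arguments. Unset Strict Implicit. Unset Printing Implicit Defensive.
Local Open Scope ring_scope.

Section WeightedSums.

Variables (R : realFieldType) (I : finType).

Lemma weighted_cauchy_schwarz (P : pred I) (w u v : I -> R) :
  (forall x, P x -> 0 <= w x) ->
  (\sum_(x | P x) w x * u x * v x) ^+ 2 <=
  (\sum_(x | P x) w x * u x ^+ 2) * (\sum_(x | P x) w x * v x ^+ 2).
Proof.
move=> w0.
set A := \sum_(x | P x) w x * u x ^+ 2.
set B := \sum_(x | P x) w x * v x ^+ 2.
set C := \sum_(x | P x) w x * u x * v x.
(* Lagrange's identity, weighted by w x * w y. *)
have lagrange : \sum_(x | P x) \sum_(y | P y) w x * w y * (u x * v y - u y * v x) ^+ 2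
   = A * B + A * B - 2 * (C * C).
  have AB1 : A * B = \sum_(x | P x) \sum_(y | P y) (w x * u x ^+ 2) * (w y * v y ^+ 2).
    by rewrite /A mulr_suml; apply: eq_bigr => x _; rewrite mulr_sumr.
  have AB2 : A * B = \sum_(x | P x) \sum_(y | P y) (w y * u y ^+ 2) * (w x * v x ^+ 2).
    rewrite mulrC /B mulr_suml; apply: eq_bigr => x _; rewrite mulr_sumr.
    by apply: eq_bigr => y _; rewrite mulrC.
  have CC : C * C = \sum_(x | P x) \sum_(y | P y) (w x * u x * v x) * (w y * u y * v y).
    by rewrite /C mulr_suml; apply: eq_bigr => x _; rewrite mulr_sumr.
  rewrite {1}AB1 AB2 CC -big_split mulr_sumr -sumrB.
  apply: eq_bigr => x _; rewrite -big_split mulr_sumr -sumrB.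
  by apply: eq_bigr => y _ /=; ring.
have : 0 <= A * B + A * B - 2 * (C * C).
  rewrite -lagrange; apply: sumr_ge0 => x Px; apply: sumr_ge0 => y Py.
  by rewrite mulr_ge0 ?sqr_ge0 // mulr_ge0 // w0.
rewrite expr2; lra.
Qed.

Lemma ler_sum_subpred (P : pred I) (F : I -> R) :
  (forall x, 0 <= F x) -> \sum_(x | P x) F x <= \sum_x F x.
Proof.
move=> F0; rewrite [X in _ <= X](bigID P) /= lerDl.
by apply: sumr_ge0 => x _.
Qed.

End WeightedSums.

Section CollisionProbability.

Variables (R : realFieldType) (Omega : finType) (D : Omega -> R).

Lemma inv_card_le_cp : is_distribution D -> 1 <= #|Omega|%:R * cp D.
Proof.
move=> [_ D1].
have := @weighted_cauchy_schwarz _ _ predT (fun _ => 1) (fun _ => 1) D (fun _ _ => ler01).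
under eq_bigr do rewrite !mul1r.
under [X in _ <= X * _]eq_bigr do rewrite expr1n mulr1.
under [X in _ <= _ * X]eq_bigr do rewrite mul1r.
by rewrite D1 expr1n sumr_const.
Qed.

Lemma leq_card_cp (N : nat) :
  (0 < N)%N -> is_distribution D -> cp D <= N%:R^-1 -> (N <= #|Omega|)%N.
Proof.
move=> N0 Ddist hcp.
have : 1 <= #|Omega|%:R * N%:R^-1 :> R.
  by apply: le_trans (inv_card_le_cp Ddist) _; rewrite ler_wpM2l.
by rewrite ler_pdivlMr ?ltr0n // mul1r ler_nat.
Qed.

Lemma sqr_sum_in_le_cp (T : {set Omega}) (g : Omega -> R) :
  (\sum_(x in T) D x * g x) ^+ 2 <= cp D * \sum_(x in T) g x ^+ 2.
Proof.
have := @weighted_cauchy_schwarz _ _ (mem T) (fun _ => 1) D g (fun _ _ => ler01).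
under eq_bigr do rewrite mul1r.
under [X in _ <= X * _]eq_bigr do rewrite mul1r.
under [X in _ <= _ * X]eq_bigr do rewrite mul1r.
move/le_trans; apply; apply: ler_wpM2r; first by apply: sumr_ge0 => x _; exact: sqr_ge0.
by apply: ler_sum_subpred => x; exact: sqr_ge0.
Qed.

Lemma sqr_sum_notin_le_bound (T : {set Omega}) (g : Omega -> R) (a : R) :
  is_distribution D -> 0 <= a -> (forall x, x \notin T -> g x ^+ 2 <= a) ->
  (\sum_(x | x \notin T) D x * g x) ^+ 2 <= a.
Proof.
move=> [D0 D1] a0 ga.
have := @weighted_cauchy_schwarz _ _ (predC (mem T)) D (fun _ => 1) g (fun x _ => D0 x).
under eq_bigr do rewrite mulr1.
under [X in _ <= X * _]eq_bigr do rewrite expr1n mulr1.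
move/le_trans; apply.
set p := \sum_(x | x \notin T) D x.
have p0 : 0 <= p by apply: sumr_ge0.
have p1 : p <= 1 by rewrite -D1; apply: ler_sum_subpred.
have Eg0 : 0 <= \sum_(x | x \notin T) D x * g x ^+ 2.
  by apply: sumr_ge0 => x _; rewrite mulr_ge0 ?sqr_ge0.
have Ega : \sum_(x | x \notin T) D x * g x ^+ 2 <= p * a.
  rewrite /p mulr_suml; apply: ler_sum => x /ga gxa; exact: ler_wpM2l.
nra.
Qed.

End CollisionProbability.

Section MaximalSubset.

Variables (R : realFieldType) (Omega : finType) (h : Omega -> R).

Definition max_sum_set (T : {set Omega}) : Prop :=
  forall T' : {set Omega}, #|T'| = #|T| -> \sum_(x in T') h x <= \sum_(x in T) h x.

Lemma exists_max_sum_set (N : nat) :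
  (N <= #|Omega|)%N -> exists2 T : {set Omega}, #|T| = N & max_sum_set T.
Proof.
move=> NO; have [s [s_uniq s_size _]] := card_geqP NO.
have cardT0 : #|[set x in s]| == N by rewrite cardsE -s_size (card_uniqP s_uniq).
case: (@arg_maxP _ _ _ _ (fun T : {set Omega} => #|T| == N)
                   (fun T : {set Omega} => \sum_(x in T) h x) cardT0).
move=> T /eqP cardT Tmax; exists T => // T' cardT'.
by apply: Tmax; rewrite cardT' cardT.
Qed.

Lemma max_sum_set_exchange (T : {set Omega}) x y :
  max_sum_set T -> x \notin T -> y \in T -> h x <= h y.
Proof.
move=> Tmax xT yT.
have xTy : x \notin T :\ y by rewrite !inE (negbTE xT) andbF.
have card_swap : #|x |: (T :\ y)| = #|T|.
  by rewrite cardsU1 xTy (cardsD1 y T) yT.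
have := Tmax _ card_swap.
rewrite big_setU1 //= (big_setD1 y yT) /=; lra.
Qed.

Lemma max_sum_set_notin_le_avg (T : {set Omega}) x :
  (0 < #|T|)%N -> max_sum_set T -> x \notin T -> h x <= avg T h.
Proof.
move=> T0 Tmax xT; rewrite /avg ler_pdivlMr ?ltr0n // mulr_natr -sumr_const.
by apply: ler_sum => y; exact: max_sum_set_exchange.
Qed.

End MaximalSubset.

Theorem lemma8p4 (R : realFieldType) (Omega : finType) (D : Omega -> R) (N : nat)
  (g : Omega -> R) :
  (0 < N)%N -> is_distribution D -> cp D <= N%:R^-1 ->
  exists T : {set Omega}, #|T| = N /\
    avg T (fun x => g x ^+ 2) >= (expect D g) ^+ 2 / 4.
Proof.
move=> N0 Ddist hcp.
set h := fun x => g x ^+ 2.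
have [T cardT Tmax] := exists_max_sum_set h (leq_card_cp N0 Ddist hcp).
exists T; split=> //.
set a := avg T h.
have a0 : 0 <= a by rewrite divr_ge0 // sumr_ge0 // => x _; exact: sqr_ge0.
have in_T : (\sum_(x in T) D x * g x) ^+ 2 <= a.
  apply: le_trans (sqr_sum_in_le_cp D T g) _.
  by rewrite /a /avg cardT mulrC ler_wpM2l // sumr_ge0 // => x _; exact: sqr_ge0.
have notin_T : (\sum_(x | x \notin T) D x * g x) ^+ 2 <= a.
  apply: sqr_sum_notin_le_bound Ddist a0 _ => x.
  by apply: max_sum_set_notin_le_avg; rewrite // cardT.
rewrite /expect (bigID (mem T)) /= ler_pdivrMr //; nra.
Qed.
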